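(* Fix an association $\kappa$ in which every UE is served by at least one cell and every cell serves at least one UE, and fix a demand vector $\bm{d}\in\mathbb{R}^m_{>0}$. Let $\bm{p}\in\mathbb{R}^n_{>0}$, let $\alpha>1$, and set $\bm{p}'=\bm{p}/\alpha$. Let $\bm{x}$ be the fixed point $\bm{x}=\bm{f}(\bm{h}(\bm{x},\bm{p},\kappa),\bm{d},\kappa)$, and let $\bm{x}'$ be the fixed point $\bm{x}'=\bm{f}(\bm{h}(\bm{x}',\bm{p}',\kappa),\bm{d},\kappa)$. Then $\bm{x}'\ge\bm{x}$, that is, $x'_i\ge x_i$ for all $i\in\mathcal{I}$ and $\bm{x}'\neq\bm{x}$.
   Context: Cellular network model. $\mathcal{I}$ is a set of $n$ cells and $\mathcal{J}$ a set of $m$ UEs. For an association $\kappa\in\{0,1\}^{n\times m}$, let $\mathcal{I}_j=\{i:\kappa_{ij}=1\}$ and $\mathcal{J}_i=\{j:\kappa_{ij}=1\}$. $M,B>0$ are constants, $\sigma^2>0$ is the noise power and $g_{ij}>0$ are the channel gains. For $\bm{x}\in\mathbb{R}^n_{\ge0}$ and $\bm{p}\in\mathbb{R}^n_{>0}$: - $h_j(\bm{x},\bm{p},\kappa)=\dfrac{\sum_{i\in\mathcal{I}_j}p_ig_{ij}}{\sum_{k\in\mathcal{I}\setminus\mathcal{I}_j}p_kg_{kj}x_k+\sigma^2}$ (SINR of UE $j$); - $f_i(\bm{\gamma},\bm{d},\kappa)=\sum_{j\in\mathcal{J}_i}\dfrac{d_j}{MB\log_2(1+\gamma_j)}$ (load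 of cell $i$). It is known, and assumed here, that for fixed $\bm{p},\bm{d},\kappa$ the map $\bm{x}\mapsto\bm{f}(\bm{h}(\bm{x},\bm{p},\kappa),\bm{d},\kappa)$ is a standard interference function with a unique fixed point in $\mathbb{R}^n_{\ge0}$. The vector inequality $\bm{x}'\ge\bm{x}$ means componentwise $\ge$ with strict inequality in at least one component. *)

From HB Require Import structures.
From mathcomp Require Import all_boot all_order all_algebra.
From mathcomp Require Import reals exp.
Set Implicit Arguments. Unset Strict Implicit. Unset Printing Implicit Defensive.
Import Order.TTheory GRing.Theory Num.Theory.
Local Open Scope ring_scope.

(* Cells are indexed by 'I_n, UEs by 'I_m; kappa i j = true iff cell i serves UE j. *)

Definition log2 {R : realType} (y : R) : R := ln y / ln 2.

Definition sinr {R : realType} {n m : nat} (x p : 'I_n -> R) (kappa : 'I_n -> 'I_m -> bool)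
  (g : 'I_n -> 'I_m -> R) (sigma2 : R) (j : 'I_m) : R :=
  (\sum_(i < n | kappa i j) p i * g i j) /
  (\sum_(k < n | ~~ kappa k j) p k * g k j * x k + sigma2).

Definition load {R : realType} {n m : nat} (gamma : 'I_m -> R) (d : 'I_m -> R)
  (kappa : 'I_n -> 'I_m -> bool) (M B : R) (i : 'I_n) : R :=
  \sum_(j < m | kappa i j) d j / (M * B * log2 (1 + gamma j)).

(* the composed map x |-> f(h(x,p,kappa),d,kappa) *)
Definition loadmap {R : realType} {n m : nat} (p : 'I_n -> R) (d : 'I_m -> R)
  (kappa : 'I_n -> 'I_m -> bool) (g : 'I_n -> 'I_m -> R) (sigma2 M B : R)
  (x : 'I_n -> R) : 'I_n -> R :=
  fun i => load (sinr x p kappa g sigma2) d kappa M B i.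

From HB Require Import structures.
From mathcomp Require Import all_boot all_order all_algebra.
From mathcomp Require Import reals exp convex interval_inference.
From mathcomp Require Import ring lra.
Set Implicit Arguments. Unset Strict Implicit. Unset Printing Implicit Defensive.
Import Order.TTheory GRing.Theory Num.Theory.
Local Open Scope ring_scope.

(* Write [S] for the load map at power [p] and [T] for the one at [p / alpha].
   Both are monotone, [T] is subhomogeneous ([T (mu y) <= mu T y] for
   [mu >= 1], by concavity of [ln]), and [S < T] pointwise since lowering every
   power lowers every SINR (the noise does not scale).  If [mu := max_i x_i / x'_i]
   exceeded [1], at a maximising cell [k] we would get
   [x_k = S x k <= S (mu x') k < T (mu x') k <= mu T x' k = mu x'_k = x_k]. *)

Section FixedPointComparison.
Variables (R : realFieldType) (n : nat) (S T : ('I_n -> R) -> 'I_n -> R).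
Hypothesis S_mono : forall y z, (forall i, 0 <= y i) -> (forall i, y i <= z i) ->
  forall i, S y i <= S z i.
Hypothesis S_lt_T : forall y i, (forall i, 0 <= y i) -> S y i < T y i.
Hypothesis T_subhom : forall y mu i, (forall i, 0 <= y i) -> 1 <= mu ->
  T (fun k => mu * y k) i <= mu * T y i.

Lemma fixed_point_le (x x' : 'I_n -> R) :
  (forall i, 0 <= x i) -> (forall i, 0 < x' i) ->
  (forall i, x i = S x i) -> (forall i, x' i = T x' i) ->
  forall i, x i <= x' i.
Proof.
move=> x_ge0 x'_gt0 Sx Tx' i.
have [k _ k_max] := @arg_maxP _ _ _ i xpredT (fun i => x i / x' i) isT.
set mu := x k / x' k in k_max.
have [mu_le1 | mu_gt1] := leP mu 1.
  by have := le_trans (k_max i isT) mu_le1; rewrite ler_pdivrMr ?x'_gt0 // mul1r.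
have x_le_mux' j : x j <= mu * x' j by rewrite -ler_pdivrMr ?x'_gt0 //; apply: k_max.
have mux'_ge0 j : 0 <= mu * x' j by rewrite mulr_ge0 ?ltW // (lt_trans ltr01).
have : x k < x k.
  rewrite {1}Sx; apply: (le_lt_trans (S_mono x_ge0 x_le_mux' k)).
  apply: (lt_le_trans (S_lt_T k mux'_ge0)).
  apply: (le_trans (T_subhom k (fun j => ltW (x'_gt0 j)) (ltW mu_gt1))).
  by rewrite -Tx' /mu divfK // gt_eqF.
by rewrite ltxx.
Qed.

Lemma fixed_point_neq (x x' : 'I_n -> R) : (0 < n)%N -> (forall i, 0 <= x i) ->
  (forall i, x i = S x i) -> (forall i, x' i = T x' i) -> x' <> x.
Proof.
move=> n_gt0 x_ge0 Sx Tx' x'E; pose i0 := Ordinal n_gt0.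
by have := S_lt_T i0 x_ge0; rewrite -Sx -x'E -Tx' ltxx.
Qed.

End FixedPointComparison.

Lemma ln1p_le_mul_ln1p_div (R : realType) (s mu : R) : 0 <= s -> 1 <= mu ->
  ln (1 + s) <= mu * ln (1 + s / mu).
Proof.
move=> s_ge0 mu_ge1; have mu_gt0 : 0 < mu by lra.
have t_ge0 : 0 <= mu^-1 by rewrite invr_ge0 ltW.
have t_le1 : mu^-1 <= 1 by rewrite invf_le1.
have s1_gt0 : 0 < 1 + s by lra.
have := @concave_ln R (Itv01 t_ge0 t_le1) (1 + s) 1 s1_gt0 ltr01.
rewrite !convRE /= ln1 mulr0 addr0 => concavity.
rewrite -ler_pdivrMl //; apply: (le_trans concavity).
by rewrite /unstable.onem mulr1 mulrDr mulr1 addrAC subrKC mulrC.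
Qed.

Section Rate.
Variables (R : realType) (M B : R).
Hypotheses (M_gt0 : 0 < M) (B_gt0 : 0 < B).

Definition rate (s : R) : R := M * B * log2 (1 + s).

Lemma rateE s : rate s = M * B / ln 2 * ln (1 + s).
Proof. by rewrite /rate /log2 mulrA mulrAC. Qed.

Lemma rate_coef_gt0 : 0 < M * B / ln (2 : R).
Proof. by rewrite !mulr_gt0 // invr_gt0 ln_gt0 // ltr1n. Qed.

Lemma rate_gt0 s : 0 < s -> 0 < rate s.
Proof. by move=> s_gt0; rewrite rateE mulr_gt0 ?rate_coef_gt0 // ln_gt0 // ltrDl. Qed.

Lemma ler_rate s s' : 0 <= s -> s <= s' -> rate s <= rate s'.
Proof.
move=> s_ge0 le_ss'; rewrite !rateE ler_pM2l ?rate_coef_gt0 //.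
by rewrite ler_ln ?posrE; lra.
Qed.

Lemma ltr_rate s s' : 0 <= s -> s < s' -> rate s < rate s'.
Proof.
move=> s_ge0 lt_ss'; rewrite !rateE ltr_pM2l ?rate_coef_gt0 //.
by rewrite ltr_ln ?posrE; lra.
Qed.

Lemma rate_le_mul_div s mu : 0 <= s -> 1 <= mu -> rate s <= mu * rate (s / mu).
Proof.
move=> s_ge0 mu_ge1; rewrite !rateE mulrCA ler_pM2l ?rate_coef_gt0 //.
exact: ln1p_le_mul_ln1p_div.
Qed.

End Rate.

Section Load.
Variables (R : realType) (n m : nat) (kappa : 'I_n -> 'I_m -> bool)
  (M B : R) (d : 'I_m -> R).
Hypotheses (M_gt0 : 0 < M) (B_gt0 : 0 < B) (d_gt0 : forall j, 0 < d j).

Lemma loadE gamma i :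
  load gamma d kappa M B i = \sum_(j < m | kappa i j) d j / rate M B (gamma j).
Proof. by []. Qed.

Lemma has_served i : (exists j, kappa i j) -> has (kappa i) (index_enum 'I_m).
Proof. by case=> j kij; apply/hasP; exists j; rewrite ?mem_index_enum. Qed.

Lemma ler_load gamma gamma' i : (forall j, 0 < gamma j) ->
  (forall j, gamma j <= gamma' j) ->
  load gamma' d kappa M B i <= load gamma d kappa M B i.
Proof.
move=> gamma_gt0 le_gamma; rewrite !loadE; apply: ler_sum => j _.
have gamma'_gt0 : 0 < gamma' j := lt_le_trans (gamma_gt0 j) (le_gamma j).
by rewrite ler_pM2l // lef_pV2 ?posrE ?rate_gt0 // ler_rate // ltW.
Qed.

Lemma ltr_load gamma gamma' i : (exists j, kappa i j) ->
  (forall j, 0 < gamma j) -> (forall j, gamma j < gamma' j) ->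
  load gamma' d kappa M B i < load gamma d kappa M B i.
Proof.
move=> served gamma_gt0 lt_gamma; rewrite !loadE; apply: ltr_sum.
  exact: has_served.
move=> j _; have gamma'_gt0 : 0 < gamma' j := lt_trans (gamma_gt0 j) (lt_gamma j).
by rewrite ltr_pM2l // ltf_pV2 ?posrE ?rate_gt0 // ltr_rate // ltW.
Qed.

Lemma load_gt0 gamma i : (exists j, kappa i j) -> (forall j, 0 < gamma j) ->
  0 < load gamma d kappa M B i.
Proof.
move=> served gamma_gt0; rewrite loadE.
apply: (@le_lt_trans _ _ (\sum_(j < m | kappa i j) 0)); first by rewrite big1_eq.
by apply: ltr_sum => [|j _]; rewrite ?has_served // divr_gt0 ?rate_gt0.
Qed.

Lemma load_le_mul gamma gamma' mu i : 1 <= mu -> (forall j, 0 < gamma j) ->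
  (forall j, gamma j / mu <= gamma' j) ->
  load gamma' d kappa M B i <= mu * load gamma d kappa M B i.
Proof.
move=> mu_ge1 gamma_gt0 le_gamma; have mu_gt0 : 0 < mu by lra.
rewrite !loadE mulr_sumr; apply: ler_sum => j _.
have rate_pos s : 0 < s -> 0 < rate M B s by exact: rate_gt0.
have gamma_mu_gt0 : 0 < gamma j / mu by rewrite divr_gt0.
have gamma'_gt0 : 0 < gamma' j := lt_le_trans gamma_mu_gt0 (le_gamma j).
apply: (@le_trans _ _ (d j / rate M B (gamma j / mu))).
  rewrite ler_pM2l // lef_pV2 ?posrE ?rate_pos //.
  by rewrite ler_rate // ltW.
rewrite mulrCA ler_pM2l // -[mu / _]invf_div lef_pV2 ?posrE ?divr_gt0 ?rate_pos //.
by rewrite ler_pdivrMr // mulrC rate_le_mul_div // ltW.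
Qed.

End Load.

Section Sinr.
Variables (R : realType) (n m : nat) (kappa : 'I_n -> 'I_m -> bool)
  (g : 'I_n -> 'I_m -> R) (sigma2 : R).
Hypotheses (g_gt0 : forall i j, 0 < g i j) (sigma2_gt0 : 0 < sigma2)
  (ue_served : forall j, exists i, kappa i j).
Variables (q y : 'I_n -> R) (j : 'I_m).
Hypotheses (q_gt0 : forall i, 0 < q i) (y_ge0 : forall i, 0 <= y i).

Let gain_ge0 k : 0 <= q k * g k j := mulr_ge0 (ltW (q_gt0 k)) (ltW (g_gt0 k j)).

Local Notation signal := (\sum_(i < n | kappa i j) q i * g i j).
Local Notation interference := (\sum_(k < n | ~~ kappa k j) q k * g k j * y k).

Lemma signal_gt0 : 0 < signal.
Proof.
have [i kij] := ue_served j; rewrite (bigD1 i) //=.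
apply: (@lt_le_trans _ _ (q i * g i j)); first by rewrite mulr_gt0.
by rewrite lerDl; apply: sumr_ge0.
Qed.

Lemma interference_ge0 : 0 <= interference.
Proof. by apply: sumr_ge0 => k _; rewrite mulr_ge0. Qed.

Lemma sinr_gt0 : 0 < sinr y q kappa g sigma2 j.
Proof. by rewrite divr_gt0 ?signal_gt0 ?ltr_wpDl ?interference_ge0. Qed.

Lemma ler_sinr z : (forall i, y i <= z i) ->
  sinr z q kappa g sigma2 j <= sinr y q kappa g sigma2 j.
Proof.
move=> le_yz; have z_ge0 i : 0 <= z i := le_trans (y_ge0 i) (le_yz i).
have Iz_ge0 : 0 <= \sum_(k < n | ~~ kappa k j) q k * g k j * z k.
  by apply: sumr_ge0 => k _; rewrite mulr_ge0.
rewrite ler_pM2l ?signal_gt0 // lef_pV2 ?posrE ?ltr_wpDl ?interference_ge0 //.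
by rewrite lerD2r; apply: ler_sum => k _; rewrite ler_wpM2l.
Qed.

Lemma sinr_div_power_lt alpha : 1 < alpha ->
  sinr y (fun i => q i / alpha) kappa g sigma2 j < sinr y q kappa g sigma2 j.
Proof.
move=> alpha_gt1; have alpha_gt0 : 0 < alpha by lra.
have I_ge0 := interference_ge0.
rewrite /sinr.
have -> : \sum_(i < n | kappa i j) q i / alpha * g i j = signal / alpha.
  by rewrite mulr_suml; apply: eq_bigr => i _; rewrite mulrAC.
have -> : \sum_(k < n | ~~ kappa k j) q k / alpha * g k j * y k = interference / alpha.
  by rewrite mulr_suml; apply: eq_bigr => k _; ring.
have -> : signal / alpha / (interference / alpha + sigma2)
    = signal / (interference + alpha * sigma2).
  by field; rewrite !gt_eqF // ltr_wpDl ?mulr_gt0.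
have D_gt0 : 0 < interference + sigma2 by rewrite ltr_wpDl.
have D'_gt0 : 0 < interference + alpha * sigma2 by rewrite ltr_wpDl ?mulr_gt0.
by rewrite ltr_pM2l ?signal_gt0 // ltf_pV2 // ltrD2l ltr_pMl.
Qed.

Lemma sinr_scale_ge mu : 1 <= mu ->
  sinr y q kappa g sigma2 j / mu <= sinr (fun k => mu * y k) q kappa g sigma2 j.
Proof.
move=> mu_ge1; have mu_gt0 : 0 < mu by lra.
have I_ge0 := interference_ge0.
rewrite /sinr.
under [X in _ <= _ / (X + _)]eq_bigr do rewrite mulrCA.
rewrite -mulr_sumr -mulrA -invfM ler_pM2l ?signal_gt0 //.
have D_gt0 : 0 < (interference + sigma2) * mu by rewrite mulr_gt0 ?ltr_wpDl.
have D'_gt0 : 0 < mu * interference + sigma2 by rewrite ltr_wpDl // mulr_ge0 // ltW.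
by rewrite lef_pV2 // mulrDl mulrC lerD2l ler_peMr // ltW.
Qed.

End Sinr.

Section LoadMap.
Variables (R : realType) (n m : nat) (kappa : 'I_n -> 'I_m -> bool)
  (g : 'I_n -> 'I_m -> R) (sigma2 M B : R) (d : 'I_m -> R).
Hypotheses (M_gt0 : 0 < M) (B_gt0 : 0 < B) (sigma2_gt0 : 0 < sigma2)
  (g_gt0 : forall i j, 0 < g i j) (ue_served : forall j, exists i, kappa i j)
  (cell_serves : forall i, exists j, kappa i j) (d_gt0 : forall j, 0 < d j).
Variable q : 'I_n -> R.
Hypothesis q_gt0 : forall i, 0 < q i.

Local Notation T q := (loadmap q d kappa g sigma2 M B).

Lemma loadmap_gt0 y i : (forall i, 0 <= y i) -> 0 < T q y i.
Proof. by move=> y_ge0; apply: load_gt0 => // j; apply: sinr_gt0. Qed.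

Lemma loadmap_le y z : (forall i, 0 <= y i) -> (forall i, y i <= z i) ->
  forall i, T q y i <= T q z i.
Proof.
move=> y_ge0 le_yz i; have z_ge0 k : 0 <= z k := le_trans (y_ge0 k) (le_yz k).
by apply: ler_load => // j; [apply: sinr_gt0 | apply: ler_sinr].
Qed.

Lemma loadmap_lt_div_power alpha y i : 1 < alpha -> (forall i, 0 <= y i) ->
  T q y i < T (fun k => q k / alpha) y i.
Proof.
move=> alpha_gt1 y_ge0; have alpha_gt0 : 0 < alpha by lra.
have q'_gt0 k : 0 < q k / alpha by rewrite divr_gt0.
by apply: ltr_load => // j; [apply: sinr_gt0 | apply: sinr_div_power_lt].
Qed.

Lemma loadmap_le_mul y mu i : (forall i, 0 <= y i) -> 1 <= mu ->
  T q (fun k => mu * y k) i <= mu * T q y i.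
Proof.
move=> y_ge0 mu_ge1.
by apply: load_le_mul => // j; [apply: sinr_gt0 | apply: sinr_scale_ge].
Qed.

End LoadMap.

Theorem lemma3 (R : realType) (n m : nat) (kappa : 'I_n -> 'I_m -> bool)
  (g : 'I_n -> 'I_m -> R) (sigma2 M B alpha : R) (d : 'I_m -> R) (p x x' : 'I_n -> R) :
  (0 < n)%N -> 0 < M -> 0 < B -> 0 < sigma2 ->
  (forall i j, 0 < g i j) ->
  (forall j, exists i, kappa i j) ->
  (forall i, exists j, kappa i j) ->
  (forall j, 0 < d j) ->
  (forall i, 0 < p i) ->
  1 < alpha ->
  (forall i, 0 <= x i) ->
  (forall i, 0 <= x' i) ->
  x = loadmap p d kappa g sigma2 M B x ->
  x' = loadmap (fun i => p i / alpha) d kappa g sigma2 M B x' ->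
  (forall i, x i <= x' i) /\ x' <> x.
Proof.
move=> n_gt0 M_gt0 B_gt0 sigma2_gt0 g_gt0 ue_served cell_serves d_gt0 p_gt0
  alpha_gt1 x_ge0 x'_ge0 x_fix x'_fix.
have p'_gt0 i : 0 < p i / alpha by rewrite divr_gt0 // (lt_trans ltr01).
pose S := loadmap p d kappa g sigma2 M B.
pose T := loadmap (fun i => p i / alpha) d kappa g sigma2 M B.
have S_mono y z : (forall i, 0 <= y i) -> (forall i, y i <= z i) ->
    forall i, S y i <= S z i by exact: loadmap_le.
have S_lt_T y i : (forall i, 0 <= y i) -> S y i < T y i by exact: loadmap_lt_div_power.
have T_subhom y mu i : (forall i, 0 <= y i) -> 1 <= mu ->
    T (fun k => mu * y k) i <= mu * T y i by exact: loadmap_le_mul.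
have S_x i : x i = S x i by rewrite {1}x_fix.
have T_x' i : x' i = T x' i by rewrite {1}x'_fix.
have x'_gt0 i : 0 < x' i by rewrite T_x' loadmap_gt0.
split; first exact: (fixed_point_le S_mono S_lt_T T_subhom x_ge0 x'_gt0 S_x T_x').
exact: (fixed_point_neq S_lt_T n_gt0 x_ge0 S_x T_x').
Qed.
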